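(* For every instance, a probability distribution $q$ on the tests is a memoryless schedule attaining $\mathrm{opt}_M\text{-}\mathrm{MAX}$ (the infimum over memoryless schedules of the common value $\mathrm{WMP}[q]=\mathrm{MWP}[q]=\mathrm{WEP}[q]=\max_e p_e/Q_e$) if and only if $q$ (together with some $z$) is an optimal solution of the linear program $$\text{maximize } z\quad\text{subject to } \frac{1}{p_e}\sum_{i:\,e\in s_i}q_i\ge z\ \ (e\in E),\quad q_i\ge 0\ \ (i\in[m]),\quad \sum_iq_i=1.$$
   Context: An instance consists of a finite set $E$ of elements with positive weights $(p_e)_{e\in E}$ normalized so that $\max_e p_e=1$, and $m$ tests; test $i\in[m]$ is a subset $s_i\subseteq E$. A memoryless schedule is a probability distribution $q$ on $[m]$; it generates a test sequence by drawing each test independently according to $q$. $Q_e=\sum_{i:e\in s_i}q_i$. Detection time $T(e,t)=\mathbb{E}[1+\min\{h\ge0:e\in s_{\sigma_{t+h}}\}]$; $\mathrm{WMP}=\sup_{e,t}p_eT(e,t)$, $\mathrm{WEP}=\max_e p_e\lim_H\frac1H\sum_{t\le H}T(e,t)$, $\mathrm{MWP}=\lim_H\frac1H\sum_{t\le H}\max_ep_eT(e,t)$. *)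

From HB Require Import structures.
From mathcomp Require Import all_boot all_order all_algebra.
From mathcomp Require Import boolp classical_sets reals constructive_ereal ereal.
Set Implicit Arguments. Unset Strict Implicit. Unset Printing Implicit Defensive.
Import Order.TTheory GRing.Theory Num.Theory.
Local Open Scope ring_scope.

Section Defs.
Variables (R : realType) (E : finType) (m : nat).

Definition valid_weights (p : E -> R) : Prop :=
  (forall e, 0 < p e) /\ (forall e, p e <= 1) /\ (exists e, p e = 1).

Definition is_distribution (q : 'I_m -> R) : Prop :=
  (forall i, 0 <= q i) /\ \sum_(i < m) q i = 1.

Definition Qe (s : 'I_m -> {set E}) (q : 'I_m -> R) (e : E) : R :=
  \sum_(i < m | e \in s i) q i.

(* p_e / Q_e as an extended real, = +oo when Q_e = 0 (e never detected) *)
Definition ratio (p : E -> R) (s : 'I_m -> {set E}) (q : 'I_m -> R) (e : E)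
  : \bar R :=
  if Qe s q e == 0 then +oo%E else (p e / Qe s q e)%:E.

(* Common value WMP[q] = MWP[q] = WEP[q] = max_e p_e / Q_e of a memoryless
   schedule q *)
Definition memoryless_cost (p : E -> R) (s : 'I_m -> {set E})
  (q : 'I_m -> R) : \bar R :=
  (\big[Order.max/-oo]_(e : E) ratio p s q e)%E.

Definition optM_MAX (p : E -> R) (s : 'I_m -> {set E}) : \bar R :=
  ereal_inf [set memoryless_cost p s q | q in is_distribution].

Definition LP_feasible (p : E -> R) (s : 'I_m -> {set E})
  (q : 'I_m -> R) (z : R) : Prop :=
  (forall e, z <= (p e)^-1 * Qe s q e) /\
  (forall i, 0 <= q i) /\ \sum_(i < m) q i = 1.

Definition LP_optimal (p : E -> R) (s : 'I_m -> {set E})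
  (q : 'I_m -> R) (z : R) : Prop :=
  LP_feasible p s q z /\
  (forall q' z', LP_feasible p s q' z' -> z' <= z).

End Defs.

(* The memoryless cost is max_e p_e / Q_e = 1 / min_e (Q_e / p_e), and
   x |-> 1/x (with 1/0 = +oo) is an order-reversing embedding of the
   nonnegative reals into the extended reals.  Hence a distribution minimises
   the cost iff it maximises the minimal coverage min_e Q_e / p_e, which is
   exactly the largest z making (q, z) feasible for the linear program. *)
From Pilot Require Import Defs.
From HB Require Import structures.
From mathcomp Require Import all_boot all_order all_algebra.
From mathcomp Require Import boolp classical_sets reals constructive_ereal ereal.
Set Implicit Arguments. Unset Strict Implicit. Unset Printing Implicit Defensive.
Import Order.TTheory GRing.Theory Num.Theory.
Local Open Scope ring_scope.

Section ReciprocalOo.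
Variable R : realType.

Definition recip_oo (x : R) : \bar R := if x == 0 then +oo%E else (x^-1)%:E.

Lemma recip_oo_le (a b : R) : 0 <= b -> b <= a -> (recip_oo a <= recip_oo b)%E.
Proof.
move=> b_ge0 le_ba; rewrite /recip_oo; have [a0|a_neq0] := eqVneq a 0.
  have -> : b = 0 by apply/eqP; rewrite eq_le b_ge0 -a0 le_ba.
  by rewrite eqxx.
have [_|b_neq0] := eqVneq b 0; first by rewrite leey.
have b_gt0 : 0 < b by rewrite lt_def b_neq0 b_ge0.
by rewrite lee_fin lef_pV2 ?posrE // (lt_le_trans b_gt0).
Qed.

Lemma recip_oo_le_rev (a b : R) : 0 <= a -> 0 <= b ->
  (recip_oo a <= recip_oo b)%E -> b <= a.
Proof.
move=> a_ge0 b_ge0; rewrite /recip_oo; have [->|b_neq0] // := eqVneq b 0.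
have [->|a_neq0] := eqVneq a 0; first by rewrite leye_eq.
by rewrite lee_fin lef_pV2 // posrE lt_def ?a_neq0 ?b_neq0.
Qed.

End ReciprocalOo.

Section MinimalCoverage.
Variables (R : realType) (E : finType) (m : nat).
Variables (p : E -> R) (s : 'I_m -> {set E}).
Hypothesis p_gt0 : forall e, 0 < p e.

Definition coverage (q : 'I_m -> R) (e : E) : R := (p e)^-1 * Qe s q e.

Lemma coverage_ge0 (q : 'I_m -> R) e : (forall i, 0 <= q i) -> 0 <= coverage q e.
Proof.
move=> q_ge0; rewrite /coverage mulr_ge0 ?invr_ge0 ?(ltW (p_gt0 e)) //.
by apply: sumr_ge0 => i _.
Qed.

Lemma ratio_coverage (q : 'I_m -> R) e : Defs.ratio p s q e = recip_oo (coverage q e).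
Proof.
rewrite /Defs.ratio /recip_oo /coverage mulf_eq0 invr_eq0 (gt_eqF (p_gt0 e)) /=.
by case: ifP => // _; rewrite invfM invrK mulrC.
Qed.

Variable e0 : E.

Definition min_coverage (q : 'I_m -> R) : R :=
  coverage q [arg min_(e < e0) coverage q e]%O.

Lemma min_coverage_le (q : 'I_m -> R) e : min_coverage q <= coverage q e.
Proof. by rewrite /min_coverage; case: arg_minP => // e' _; apply. Qed.

Lemma memoryless_cost_min_coverage (q : 'I_m -> R) : (forall i, 0 <= q i) ->
  memoryless_cost p s q = recip_oo (min_coverage q).
Proof.
move=> q_ge0; apply/eqP; rewrite eq_le; apply/andP; split.
  apply/bigmax_leP; split=> [|e _]; first by rewrite leNye.
  by rewrite ratio_coverage recip_oo_le ?coverage_ge0 ?min_coverage_le.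
rewrite /min_coverage -ratio_coverage.
exact: (le_bigmax _ (Defs.ratio p s q)).
Qed.

Lemma memoryless_cost_le (q q' : 'I_m -> R) :
  is_distribution q -> is_distribution q' ->
  (memoryless_cost p s q <= memoryless_cost p s q')%E <->
  min_coverage q' <= min_coverage q.
Proof.
move=> [q_ge0 _] [q'_ge0 _].
rewrite !memoryless_cost_min_coverage //; split.
  by apply: recip_oo_le_rev; rewrite /min_coverage coverage_ge0.
by apply: recip_oo_le; rewrite /min_coverage coverage_ge0.
Qed.

Lemma LP_feasibleE (q : 'I_m -> R) z :
  LP_feasible p s q z <-> is_distribution q /\ z <= min_coverage q.
Proof.
split=> [[z_le q_distr]|[q_distr le_z]]; first by split; last exact: z_le.
by split=> // e; rewrite (le_trans le_z) ?min_coverage_le.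
Qed.

End MinimalCoverage.

Theorem theorem2 (R : realType) (E : finType) (m : nat)
  (p : E -> R) (s : 'I_m -> {set E}) (hp : valid_weights p)
  (q : 'I_m -> R) :
  (is_distribution q /\ memoryless_cost p s q = optM_MAX p s) <->
  (exists z : R, LP_optimal p s q z).
Proof.
case: hp => p_gt0 [_ [e0 _]].
have feasE := LP_feasibleE p s e0.
split=> [[q_distr cost_opt]|[z [/feasE [q_distr le_z] z_opt]]].
  exists (min_coverage p s e0 q); split; first exact/feasE.
  move=> q' z' /feasE [q'_distr le_z']; apply: (le_trans le_z').
  apply/(memoryless_cost_le s p_gt0 e0 q_distr q'_distr); rewrite cost_opt.
  by apply: ereal_inf_lbound; exists q'.
split=> //; apply/eqP; rewrite eq_le; apply/andP; split; last first.
  by apply: ereal_inf_lbound; exists q.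
apply/ereal_infP => _ [q' q'_distr <-].
apply/(memoryless_cost_le s p_gt0 e0 q_distr q'_distr); apply: le_trans le_z.
by apply: (z_opt q'); apply/feasE.
Qed.
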